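(* Let $a\ge b\ge1$ be integers with either $b\ge2$, or $b=1$ and $a\ge5$, and $A=\begin{pmatrix}2&-a\\-b&2\end{pmatrix}$. Then every $\pi$-system $\Sigma\subseteq\Delta_{\mathrm{re}}$ of $\mathfrak g(A)$ with $|\Sigma|>1$ is either of the form $\{\beta_1^j,\beta_2^k\}$ or $\{-\beta_1^j,-\beta_2^k\}$ where $\{\beta_1^j,\beta_2^k\}$ is a $\pi$-system (for $b=1$, $a\ge5$ this means $(j,k)\ne(1,0)$), or of the form $\Sigma=\{\beta_i^j,-\beta_i^k\}$ for some $j,k\in\mathbb Z_+$ and $i\in\{1,2\}$. In particular $|\Sigma|\le2$, and $\Sigma$ is linearly independent unless $\Sigma=\{\alpha,-\alpha\}$ for some $\alpha\in\Delta^+_{\mathrm{re}}$. Conversely, if $b\ge2$, then $\{\beta_i^j,-\beta_i^k\}$ is a $\pi$-system for all $j,k\in\mathbb Z_+$ and $i=1,2$; if $b=1$ and $a\ge5$, then $\{\beta_i^j,-\beta_i^k\}$ is a $\pi$-system if and only if $\{j,k\}\ne\{s,s+2\}$ for every $s\in\mathbb Z_+$ with $s\equiv i\pmod 2$.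
   Context: Let $\mathfrak g(A)$ be the Kac–Moody algebra with simple roots $\alpha_1,\alpha_2$, root system $\Delta$, real roots $\Delta_{\mathrm{re}}$, positive real roots $\Delta^+_{\mathrm{re}}$. $\mathbb Z_+=\{0,1,2,\dots\}$. Define $c_0=d_0=0$, $c_1=d_1=1$, $c_{k+2}+c_k=a d_{k+1}$, $d_{k+2}+d_k=b c_{k+1}$, and $\beta_1^j=c_j\alpha_1+d_{j+1}\alpha_2$, $\beta_2^j=c_{j+1}\alpha_1+d_j\alpha_2$ ($j\in\mathbb Z_+$); then $\Delta^+_{\mathrm{re}}=\{\beta_1^j,\beta_2^j\}$. A subset $\Sigma\subseteq\Delta_{\mathrm{re}}$ is a $\pi$-system if $\alpha-\beta\notin\Delta$ for all $\alpha,\beta\in\Sigma$. *)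

(* Roots of the rank-2 Kac-Moody algebra g(A),
   A = [[2,-a],[-b,2]], are encoded by their coordinates (x,y) meaning
   x*alpha_1 + y*alpha_2 in the root lattice Z^2. *)
From Stdlib Require Import ZArith List Arith.
Open Scope Z_scope.

Definition vec := (Z * Z)%type.

Definition vneg (v : vec) : vec := (- fst v, - snd v).
Definition vsub (u v : vec) : vec := (fst u - fst v, snd u - snd v).

(* simple reflections r_i(v) = v - <v, alpha_i^vee> alpha_i,
   with <alpha_j, alpha_i^vee> = A_{ij}; [true] = r_1, [false] = r_2 *)
Definition refl (a b : Z) (i : bool) (v : vec) : vec :=
  if i then (a * snd v - fst v, snd v) else (fst v, b * fst v - snd v).

Definition wact (a b : Z) (w : list bool) (v : vec) : vec :=
  fold_right (refl a b) v w.

Definition W_orbit (a b : Z) (S : vec -> Prop) (v : vec) : Prop :=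
  exists (w : list bool) (x : vec), S x /\ v = wact a b w x.

Definition simple_root (v : vec) : Prop := v = (1, 0) \/ v = (0, 1).

(* Kac's fundamental set K: alpha in Q_+ \ {0} with connected support and
   <alpha, alpha_i^vee> <= 0 for i = 1,2 (support connectivity is automatic in
   rank 2 since the Dynkin diagram is connected for a,b >= 1). *)
Definition Kset (a b : Z) (v : vec) : Prop :=
  0 <= fst v /\ 0 <= snd v /\ v <> (0, 0) /\
  2 * fst v - a * snd v <= 0 /\ - b * fst v + 2 * snd v <= 0.

(* Delta_re = W . Pi ;  Delta_im^+ = W . K  (Kac, Thm 5.4) *)
Definition real_root (a b : Z) (v : vec) : Prop := W_orbit a b simple_root v.
Definition pos_imag_root (a b : Z) (v : vec) : Prop := W_orbit a b (Kset a b) v.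
Definition imag_root (a b : Z) (v : vec) : Prop :=
  pos_imag_root a b v \/ pos_imag_root a b (vneg v).
Definition root (a b : Z) (v : vec) : Prop := real_root a b v \/ imag_root a b v.

Definition pos_real_root (a b : Z) (v : vec) : Prop :=
  real_root a b v /\ 0 <= fst v /\ 0 <= snd v.

Definition pi_system (a b : Z) (S : vec -> Prop) : Prop :=
  (forall v, S v -> real_root a b v) /\
  (forall u v, S u -> S v -> ~ root a b (vsub u v)).

(* the sequences c_k, d_k: cd n = (c_n, d_n, c_{n+1}, d_{n+1}) *)
Fixpoint cd (a b : Z) (n : nat) : Z * Z * Z * Z :=
  match n with
  | O => (0, 0, 1, 1)
  | S m => let '(c, d, c', d') := cd a b m in (c', d', a * d' - c, b * c' - d)
  end.

Definition cseq (a b : Z) (n : nat) : Z := let '(c, _, _, _) := cd a b n in c.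
Definition dseq (a b : Z) (n : nat) : Z := let '(_, d, _, _) := cd a b n in d.

Definition beta1 (a b : Z) (j : nat) : vec := (cseq a b j, dseq a b (S j)).
Definition beta2 (a b : Z) (j : nat) : vec := (cseq a b (S j), dseq a b j).
Definition beta (a b : Z) (i j : nat) : vec :=
  if Nat.eqb i 1 then beta1 a b j else beta2 a b j.

Definition pair_set (u v : vec) : vec -> Prop := fun x => x = u \/ x = v.
Definition set_eq (S T : vec -> Prop) : Prop := forall x, S x <-> T x.

(* The quadratic form q(x, y) = b x^2 - ab xy + a y^2 is W-invariant; it takes the values a, b
   on real roots, and the imaginary roots are exactly the nonzero lattice vectors with q <= 0
   (descent to Kac's fundamental set).  The real roots are the +-beta_i^j, and W maps pairs of
   them to pairs of the same kind, so whether their sum or difference is a root reduces to the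
   four sums alpha_i + beta_i'^n; evaluating q on these, using the growth of c_k and d_k,
   decides them.  It follows that two distinct real roots differ by a root whenever their
   labels (sign, type) have the same parity; a pi-system therefore has at most two elements, of
   opposite parity, which gives the listed shapes.  Finally real roots are primitive lattice
   vectors, so two distinct collinear ones are opposite. *)

From Stdlib Require Import ZArith List Arith Lia Bool.
Import ListNotations.
Open Scope Z_scope.

Definition signed (s : bool) (v : vec) : vec := if s then v else vneg v.

Lemma vneg_involutive v : vneg (vneg v) = v.
Proof. destruct v; unfold vneg; cbn [fst snd]; f_equal; ring. Qed.

Lemma vec_eq_dec (u v : vec) : {u = v} + {u <> v}.
Proof. decide equality; apply Z.eq_dec. Qed.

Lemma vec_neq0_fst v : fst v <> 0 -> v <> (0, 0).
Proof. now intros H ->. Qed.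

Lemma vsub_diag u : vsub u u = (0, 0).
Proof. destruct u; unfold vsub; cbn [fst snd]; f_equal; ring. Qed.

Lemma vneg_vsub u v : vneg (vsub u v) = vsub v u.
Proof. destruct u, v; unfold vsub, vneg; cbn [fst snd]; f_equal; ring. Qed.

Lemma vsub_signed s s' u v :
  vsub (signed s u) (signed s' v) = signed s (vsub u (signed (eqb s s') v)).
Proof. destruct s, s', u, v; unfold signed, vsub, vneg; cbn [fst snd eqb]; f_equal; ring. Qed.

Lemma vsub_signed_comm s u v : vsub v (signed s u) = signed (negb s) (vsub u (signed s v)).
Proof. destruct s, u, v; unfold signed, vsub, vneg; cbn [fst snd negb]; f_equal; ring. Qed.

Lemma primitive_collinear p q r s : Z.gcd p q = 1 -> Z.gcd r s = 1 -> p * s = q * r ->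
  (r, s) = (p, q) \/ (r, s) = (- p, - q).
Proof.
  intros Hpq Hrs E.
  assert (Hr : r = p \/ r = - p).
  { apply Z.divide_antisym.
    - apply (Z.gauss r s p); [exists q; lia | exact Hrs].
    - apply (Z.gauss p q r); [exists s; lia | exact Hpq]. }
  assert (Hs : s = q \/ s = - q).
  { apply Z.divide_antisym.
    - apply (Z.gauss s r q); [exists p; lia | now rewrite Z.gcd_comm].
    - apply (Z.gauss q p s); [exists r; lia | now rewrite Z.gcd_comm]. }
  destruct Hr as [-> | ->], Hs as [-> | ->]; auto;
    (assert (p = 0 \/ q = 0) as [-> | ->] by nia); auto.
Qed.

Lemma nat_ind2 (P : nat -> Prop) :
  P 0%nat -> P 1%nat -> (forall n, P n -> P (S (S n))) -> forall n, P n.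
Proof.
  intros H0 H1 HS n. enough (P n /\ P (S n)) by tauto.
  induction n as [|n [IH IH']]; auto.
Qed.

Lemma odd_iff_mod2 s i : (i = 1 \/ i = 2)%nat ->
  Nat.odd s = Nat.eqb i 1 <-> (s mod 2 = i mod 2)%nat.
Proof.
  intros Hi. rewrite (Nat.div2_odd s) at 2. rewrite Nat.add_comm, Nat.mul_comm, Nat.Div0.mod_add.
  destruct Hi as [-> | ->], (Nat.odd s); simpl; split; congruence.
Qed.

Section StepTwoRecurrence.
Variables (x : nat -> Z) (k : Z).
Hypotheses (k_ge2 : 2 <= k)
  (x_rec : forall n, x (S (S (S (S n)))) = k * x (S (S n)) - x n)
  (x_init : 0 <= x 0%nat <= x 2%nat /\ 0 <= x 1%nat <= x 3%nat).

Lemma rec_nonneg_mono n : 0 <= x n <= x (S (S n)).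
Proof.
  induction n using nat_ind2; [apply x_init | apply x_init |].
  rewrite x_rec. nia.
Qed.

Lemma rec_gap_mono n : x (S (S n)) - x n <= x (S (S (S (S n)))) - x (S (S n)).
Proof. rewrite x_rec. pose proof (rec_nonneg_mono (S (S n))). nia. Qed.

End StepTwoRecurrence.

Section RootSystem.
Variables a b : Z.
Hypotheses (a_pos : 0 < a) (b_pos : 0 < b).

(* The W-invariant quadratic form, scaled to be integral: [qform (1,0) = b], [qform (0,1) = a]. *)
Definition qform (v : vec) : Z :=
  b * fst v * fst v - a * b * fst v * snd v + a * snd v * snd v.

Lemma refl_involutive i v : refl a b i (refl a b i v) = v.
Proof. destruct i, v; simpl; f_equal; ring. Qed.

Lemma refl_vneg i v : refl a b i (vneg v) = vneg (refl a b i v).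
Proof. destruct i, v; unfold vneg; simpl; f_equal; ring. Qed.

Lemma refl_vsub i u v : refl a b i (vsub u v) = vsub (refl a b i u) (refl a b i v).
Proof. destruct i, u, v; unfold vsub; simpl; f_equal; ring. Qed.

Lemma qform_refl i v : qform (refl a b i v) = qform v.
Proof. destruct i, v; unfold qform; simpl; ring. Qed.

Lemma qform_vneg v : qform (vneg v) = qform v.
Proof. destruct v; unfold qform, vneg; simpl; ring. Qed.

Lemma qform_wact w v : qform (wact a b w v) = qform v.
Proof. induction w; simpl; rewrite ?qform_refl; auto. Qed.

Lemma wact_vneg w v : wact a b w (vneg v) = vneg (wact a b w v).
Proof. induction w; simpl; rewrite ?IHw, ?refl_vneg; auto. Qed.

Lemma W_orbit_refl S i v : W_orbit a b S v -> W_orbit a b S (refl a b i v).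
Proof. intros (w & x & Hx & ->). exists (i :: w), x; auto. Qed.

Lemma W_orbit_refl_iff S i v : W_orbit a b S (refl a b i v) <-> W_orbit a b S v.
Proof.
  split; [rewrite <- (refl_involutive i v) at 2|]; apply W_orbit_refl.
Qed.

Lemma real_root_vneg v : real_root a b v -> real_root a b (vneg v).
Proof.
  intros (w & x & Hx & ->). rewrite <- wact_vneg.
  (* [-alpha_i = r_i alpha_i] *)
  destruct Hx as [-> | ->]; [exists (w ++ [true]), (1, 0) | exists (w ++ [false]), (0, 1)];
    (split; [unfold simple_root; auto |]);
    unfold wact; rewrite fold_right_app; unfold vneg; simpl; repeat f_equal; ring.
Qed.

Lemma root_refl_iff i v : root a b (refl a b i v) <-> root a b v.
Proof.
  unfold root, imag_root, real_root, pos_imag_root.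
  rewrite <- refl_vneg, !W_orbit_refl_iff. tauto.
Qed.

Lemma root_vneg_iff v : root a b (vneg v) <-> root a b v.
Proof.
  assert (forall v, root a b v -> root a b (vneg v)).
  { intros u [Hu | Hu]; [left; apply real_root_vneg, Hu | right].
    unfold imag_root in *; rewrite vneg_involutive; tauto. }
  split; [rewrite <- (vneg_involutive v) at 2|]; auto.
Qed.

Lemma qform_real_root v : real_root a b v -> qform v = a \/ qform v = b.
Proof.
  intros (w & x & Hx & ->). rewrite qform_wact.
  destruct Hx as [-> | ->]; unfold qform; simpl; [right | left]; ring.
Qed.

(* The reflections are unimodular, so they preserve the gcd of the coordinates. *)
Lemma real_root_primitive v : real_root a b v -> Z.gcd (fst v) (snd v) = 1.
Proof.
  intros (w & x & Hx & ->). induction w as [|i w IH]; simpl.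
  - destruct Hx as [-> | ->]; reflexivity.
  - destruct (wact a b w x) as [p q]; destruct i; simpl in *.
    + replace (a * q - p) with (- p + a * q) by ring.
      rewrite Z.gcd_comm, Z.gcd_add_mult_diag_r, Z.gcd_opp_r, Z.gcd_comm. exact IH.
    + replace (b * p - q) with (- q + b * p) by ring.
      rewrite Z.gcd_add_mult_diag_r, Z.gcd_opp_r. exact IH.
Qed.

Lemma qform_Kset_nonpos v : Kset a b v -> qform v <= 0.
Proof.
  destruct v as [x y]; unfold Kset, qform; cbn [fst snd]. intros (Hx & Hy & _ & H1 & H2).
  (* [2 qform v = b x <v, alpha_1^vee> + a y <v, alpha_2^vee>] *)
  assert (b * x * (2 * x - a * y) <= 0) by (apply Z.mul_nonneg_nonpos; nia).
  assert (a * y * (2 * y - b * x) <= 0) by (apply Z.mul_nonneg_nonpos; nia).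
  nia.
Qed.

Lemma pos_imag_root_isotropic v : pos_imag_root a b v -> v <> (0, 0) /\ qform v <= 0.
Proof.
  intros (w & x & HK & ->). rewrite qform_wact. split.
  - assert (Hnz : x <> (0, 0)) by apply HK.
    induction w as [|i w IH]; simpl; auto.
    intro E. apply IH. rewrite <- (refl_involutive i (wact a b w x)), E.
    destruct i; simpl; f_equal; ring.
  - now apply qform_Kset_nonpos.
Qed.

Lemma qform_nonpos_sign x y : qform (x, y) <= 0 -> (x, y) <> (0, 0) ->
  (0 < x /\ 0 < y) \/ (x < 0 /\ y < 0).
Proof.
  unfold qform; cbn [fst snd]. intros Hq Hnz.
  destruct (Z.lt_trichotomy x 0) as [hx|[->|hx]];
  destruct (Z.lt_trichotomy y 0) as [hy|[->|hy]]; auto; exfalso;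
  solve [ now apply Hnz | nia ].
Qed.

Lemma pos_imag_root_of_isotropic x y :
  0 < x -> 0 < y -> qform (x, y) <= 0 -> pos_imag_root a b (x, y).
Proof.
  remember (Z.to_nat (x + y)) as n eqn:En.
  revert x y En; induction n as [n IH] using lt_wf_ind; intros x y En Hx Hy Hq.
  (* outside the fundamental chamber some reflection decreases the height [x + y] *)
  assert (descend : forall i, fst (refl a b i (x, y)) + snd (refl a b i (x, y)) < x + y ->
            pos_imag_root a b (x, y)).
  { intros i Hlt. rewrite <- (refl_involutive i (x, y)). apply W_orbit_refl.
    assert (Hq' := Hq). rewrite <- (qform_refl i) in Hq'. revert Hlt Hq'.
    destruct (refl a b i (x, y)) as [x' y'] eqn:E. intros Hlt Hq'.
    assert (Hpos : 0 < x' /\ 0 < y').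
    { destruct i; injection E as <- <-;
        destruct (qform_nonpos_sign _ _ Hq'); try (intro Hz; injection Hz); lia. }
    apply (IH (Z.to_nat (x' + y'))); simpl in *; lia. }
  destruct (Z_le_gt_dec (2 * x - a * y) 0);
    [destruct (Z_le_gt_dec (- b * x + 2 * y) 0)|].
  - exists nil, (x, y). split; [|reflexivity].
    unfold Kset; cbn [fst snd]; repeat split; try (intro Hz; injection Hz); lia.
  - apply (descend false); simpl; lia.
  - apply (descend true); simpl; lia.
Qed.

Lemma imag_root_iff v : imag_root a b v <-> v <> (0, 0) /\ qform v <= 0.
Proof.
  split.
  - intros [H | H]; [now apply pos_imag_root_isotropic|].
    destruct (pos_imag_root_isotropic _ H) as [Hnz Hq].
    rewrite qform_vneg in Hq. split; auto. intros ->. now apply Hnz.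
  - destruct v as [x y]. intros [Hnz Hq].
    destruct (qform_nonpos_sign x y Hq Hnz) as [[hx hy] | [hx hy]].
    + left. now apply pos_imag_root_of_isotropic.
    + right. apply pos_imag_root_of_isotropic; simpl; try lia.
      rewrite <- Hq. unfold qform; simpl. lia.
Qed.

Lemma root_iff v : root a b v <-> real_root a b v \/ (v <> (0, 0) /\ qform v <= 0).
Proof. unfold root. now rewrite imag_root_iff. Qed.

Lemma not_root_of_qform_gt v : a < qform v -> b < qform v -> ~ root a b v.
Proof.
  rewrite root_iff. intros Ha Hb [H | [_ H]]; [destruct (qform_real_root v H)|]; lia.
Qed.

Lemma root_of_isotropic v : v <> (0, 0) -> qform v <= 0 -> root a b v.
Proof. rewrite root_iff. tauto. Qed.

Lemma real_roots_collinear u v : real_root a b u -> real_root a b v ->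
  fst u * snd v - snd u * fst v = 0 -> v = u \/ v = vneg u.
Proof.
  intros Hu Hv E. destruct u as [p q], v as [r s].
  apply primitive_collinear; [apply (real_root_primitive _ Hu) | apply (real_root_primitive _ Hv) | ].
  simpl in E; lia.
Qed.

Lemma not_root_zero : ~ root a b (0, 0).
Proof.
  rewrite root_iff. intros [H | [H _]]; [|now apply H].
  destruct (qform_real_root _ H) as [E | E]; unfold qform in E; simpl in E; lia.
Qed.

Lemma qform_add_alpha1 v : qform (vsub (1, 0) (vneg v)) = qform v + b * (2 * fst v - a * snd v) + b.
Proof. destruct v; unfold qform, vsub, vneg; cbn [fst snd]; ring. Qed.

Lemma qform_add_alpha2 v : qform (vsub (0, 1) (vneg v)) = qform v + a * (2 * snd v - b * fst v) + a.
Proof. destruct v; unfold qform, vsub, vneg; cbn [fst snd]; ring. Qed.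

End RootSystem.

Section Classification.
Variables a b : Z.
Hypotheses (b_pos : 1 <= b) (b_le_a : b <= a) (ab_ge4 : 4 <= a * b) (a_ge5 : b = 1 -> 5 <= a).

Local Notation c := (cseq a b).
Local Notation d := (dseq a b).

Lemma cseq_rec n : c (S (S n)) = a * d (S n) - c n.
Proof. unfold cseq, dseq; simpl. destruct (cd a b n) as [[[? ?] ?] ?]; reflexivity. Qed.

Lemma dseq_rec n : d (S (S n)) = b * c (S n) - d n.
Proof. unfold cseq, dseq; simpl. destruct (cd a b n) as [[[? ?] ?] ?]; reflexivity. Qed.

Lemma cseq_values : c 2 = a /\ c 3 = a * b - 1 /\ c 4 = a * (a * b - 2)
  /\ c 5 = (a * b) * (a * b) - 3 * (a * b) + 1.
Proof. cbn [cseq dseq cd]; repeat split; ring. Qed.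

Lemma dseq_values : d 2 = b /\ d 3 = a * b - 1 /\ d 4 = b * (a * b - 2).
Proof. cbn [cseq dseq cd]; repeat split; ring. Qed.

Lemma cseq_rec2 n : c (S (S (S (S n)))) = (a * b - 2) * c (S (S n)) - c n.
Proof. rewrite (cseq_rec (S (S n))), (dseq_rec (S n)), (cseq_rec n). ring. Qed.

Lemma dseq_rec2 n : d (S (S (S (S n)))) = (a * b - 2) * d (S (S n)) - d n.
Proof. rewrite (dseq_rec (S (S n))), (cseq_rec (S n)), (dseq_rec n). ring. Qed.

Lemma cseq_init : 0 <= c 0 <= c 2 /\ 0 <= c 1 <= c 3.
Proof. destruct cseq_values as (-> & -> & _). cbn [cseq cd]. lia. Qed.

Lemma dseq_init : 0 <= d 0 <= d 2 /\ 0 <= d 1 <= d 3.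
Proof. destruct dseq_values as (-> & -> & _). cbn [dseq cd]. lia. Qed.

Lemma cseq_nonneg_mono n : 0 <= c n <= c (S (S n)).
Proof. apply rec_nonneg_mono with (a * b - 2); [lia | apply cseq_rec2 | apply cseq_init]. Qed.

Lemma dseq_nonneg_mono n : 0 <= d n <= d (S (S n)).
Proof. apply rec_nonneg_mono with (a * b - 2); [lia | apply dseq_rec2 | apply dseq_init]. Qed.

Lemma cseq_gap_mono n : c (S (S n)) - c n <= c (S (S (S (S n)))) - c (S (S n)).
Proof. apply rec_gap_mono with (a * b - 2); [lia | apply cseq_rec2 | apply cseq_init]. Qed.

Lemma dseq_gap_mono n : d (S (S n)) - d n <= d (S (S (S (S n)))) - d (S (S n)).
Proof. apply rec_gap_mono with (a * b - 2); [lia | apply dseq_rec2 | apply dseq_init]. Qed.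

Lemma cseq_pos n : 0 < c (S n).
Proof.
  induction n using nat_ind2; [reflexivity | destruct cseq_values; lia |].
  pose proof (cseq_nonneg_mono (S n)). lia.
Qed.

Lemma cseq_gap_large n : a + b <= b * (c (S (S (S (S n)))) - c (S (S n))).
Proof.
  destruct cseq_values as (c2 & c3 & c4 & c5).
  induction n using nat_ind2.
  - rewrite c4, c2. destruct (Z.eq_dec b 1) as [-> | ]; [nia|].
    assert (a + b <= a * b) by nia. assert (a * b <= b * (a * (a * b - 2) - a)) by nia. lia.
  - rewrite c5, c3. destruct (Z.eq_dec (a * b) 4) as [E | ]; [|nia].
    assert (a = 2 /\ b = 2) as [-> ->] by (destruct (Z.eq_dec b 1); nia). lia.
  - pose proof (cseq_gap_mono (S (S n))). nia.
Qed.

Lemma dseq_gap_ge2 n : 2 <= d (S (S (S n))) - d (S n).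
Proof.
  destruct dseq_values as (d2 & d3 & d4).
  induction n using nat_ind2.
  - rewrite d3. cbn [dseq cd]. lia.
  - rewrite d4, d2. destruct (Z.eq_dec b 1) as [-> | ]; nia.
  - pose proof (dseq_gap_mono (S n)). lia.
Qed.

Definition betab (t : bool) (j : nat) : vec := if t then beta1 a b j else beta2 a b j.

Local Notation alpha1 := (betab false 0).
Local Notation alpha2 := (betab true 0).

Lemma betab_true j : betab true j = (c j, d (S j)).
Proof. reflexivity. Qed.

Lemma betab_false j : betab false j = (c (S j), d j).
Proof. reflexivity. Qed.

Lemma refl_betab_same t j : refl a b t (betab t j) = betab (negb t) (S j).
Proof. destruct t; unfold betab, beta1, beta2; simpl; [rewrite (cseq_rec j) | rewrite (dseq_rec j)]; reflexivity. Qed.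

Lemma refl_betab_other t j : refl a b (negb t) (betab t (S j)) = betab (negb t) j.
Proof.
  destruct t; unfold betab, beta1, beta2; simpl;
    [rewrite (dseq_rec j) | rewrite (cseq_rec j)]; f_equal; ring.
Qed.

Lemma refl_betab0 t : refl a b (negb t) (betab t 0) = vneg (betab t 0).
Proof. destruct t; unfold betab, beta1, beta2, vneg; cbn [refl negb fst snd cseq dseq cd]; f_equal; ring. Qed.

Lemma refl_signed i s v : refl a b i (signed s v) = signed s (refl a b i v).
Proof. destruct s; simpl; rewrite ?refl_vneg; auto. Qed.

Lemma root_signed_iff s v : root a b (signed s v) <-> root a b v.
Proof. destruct s; simpl; rewrite ?root_vneg_iff; tauto. Qed.

Lemma real_root_betab t j : real_root a b (betab t j).
Proof.
  revert t; induction j as [|j IH]; intros t.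
  - exists nil. destruct t; [exists (0, 1) | exists (1, 0)]; split; hnf; auto.
  - rewrite <- (negb_involutive t), <- refl_betab_same. apply W_orbit_refl, IH.
Qed.

Lemma refl_signed_betab i s t j : exists s' t' j',
  refl a b i (signed s (betab t j)) = signed s' (betab t' j').
Proof.
  rewrite refl_signed.
  destruct (Bool.bool_dec i t) as [-> | Hne].
  - rewrite refl_betab_same. eauto.
  - replace i with (negb t) by (destruct i, t; simpl; congruence).
    destruct j as [|j].
    + rewrite refl_betab0. exists (negb s), t, 0%nat. destruct s; simpl; now rewrite ?vneg_involutive.
    + rewrite refl_betab_other. eauto.
Qed.

Lemma real_root_iff_signed_betab v :
  real_root a b v <-> exists s t j, v = signed s (betab t j).
Proof.
  split.
  - intros (w & x & Hx & ->). induction w as [|i w IH]; simpl.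
    + destruct Hx as [-> | ->]; [exists true, false, 0%nat | exists true, true, 0%nat]; reflexivity.
    + destruct IH as (s & t & j & ->). apply refl_signed_betab.
  - intros (s & t & j & ->). destruct s; [|apply real_root_vneg]; apply real_root_betab.
Qed.

Lemma betab_nonneg t j : 0 <= fst (betab t j) /\ 0 <= snd (betab t j).
Proof.
  destruct t; [rewrite betab_true | rewrite betab_false]; cbn [fst snd];
    split; first [apply cseq_nonneg_mono | apply dseq_nonneg_mono].
Qed.

Lemma qform_betab_le t j : qform a b (betab t j) <= a.
Proof. destruct (qform_real_root a b (betab t j) (real_root_betab t j)); lia. Qed.

Lemma qform_betab_ge t j : b <= qform a b (betab t j).
Proof. destruct (qform_real_root a b (betab t j) (real_root_betab t j)); lia. Qed.

Definition refl_invariant (P : vec -> vec -> Prop) : Prop :=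
  forall i u v, P (refl a b i u) (refl a b i v) <-> P u v.

Lemma refl_invariant_same P : refl_invariant P -> forall t j m,
  P (betab t j) (betab t (j + m)) <->
  P (betab (xorb t (Nat.odd j)) 0) (betab (xorb t (Nat.odd j)) m).
Proof.
  intros HP t j m. revert t; induction j as [|j IH]; intros t.
  - now rewrite xorb_false_r.
  - rewrite <- (HP (negb t)). simpl (S j + m)%nat. rewrite !refl_betab_other, IH.
    rewrite Nat.odd_succ, <- Nat.negb_odd. now destruct t, (Nat.odd j).
Qed.

Section CrossReduction.
Variable P : vec -> vec -> Prop.
Hypotheses (P_invariant : refl_invariant P) (P_sym : forall u v, P u v -> P v u).

Lemma cross_step1 j k : P (betab true j) (betab false (S k)) <-> P (betab true k) (betab false (S j)).
Proof.
  rewrite <- (P_invariant true), (refl_betab_same true), (refl_betab_other false).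
  split; apply P_sym.
Qed.

Lemma cross_step2 j k : P (betab true (S j)) (betab false k) <-> P (betab true (S k)) (betab false j).
Proof.
  rewrite <- (P_invariant false), (refl_betab_same false), (refl_betab_other true).
  split; apply P_sym.
Qed.

Lemma refl_invariant_cross j k :
  P (betab true j) (betab false k) <->
  (if Nat.odd k then P (betab true 0) (betab false (j + k))
   else P (betab true (j + k)) (betab false 0)).
Proof.
  revert j; induction k as [| |k IH] using nat_ind2; intros j.
  - now rewrite Nat.add_0_r.
  - rewrite cross_step1. now rewrite Nat.add_1_r.
  - rewrite cross_step1, cross_step2, IH.
    replace (S (S j) + k)%nat with (j + S (S k))%nat by lia.
    now rewrite Nat.odd_succ, Nat.even_succ.
Qed.

End CrossReduction.

(* [root_sub true u v]: [u - v] is a root; [root_sub false u v]: [u + v] is a root. *)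
Definition root_sub (s : bool) (u v : vec) : Prop := root a b (vsub u (signed s v)).

Lemma root_sub_refl_invariant s : refl_invariant (root_sub s).
Proof.
  intros i u v. unfold root_sub. now rewrite <- refl_signed, <- refl_vsub, root_refl_iff.
Qed.

Lemma root_sub_sym s u v : root_sub s u v -> root_sub s v u.
Proof. unfold root_sub. now rewrite vsub_signed_comm, root_signed_iff. Qed.

Lemma root_sub_comm s u v : root_sub s u v <-> root_sub s v u.
Proof. split; apply root_sub_sym. Qed.

Lemma root_sub_simple t v :
  root_sub true (betab t 0) v <-> root_sub false (betab t 0) (refl a b (negb t) v).
Proof.
  unfold root_sub. rewrite <- (root_refl_iff _ _ (negb t)), refl_vsub, refl_signed, refl_betab0.
  change (vneg (betab t 0)) with (signed false (betab t 0)).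
  now rewrite vsub_signed, root_signed_iff.
Qed.

Lemma root_alpha1_add_alpha2 : root_sub false alpha1 alpha2.
Proof.
  unfold root_sub. change (vsub alpha1 (signed false alpha2)) with ((1, 1) : vec).
  destruct (Z.eq_dec b 1) as [b1 | b1].
  - left. replace ((1, 1) : vec) with (betab true 1); [apply real_root_betab|].
    rewrite betab_true. destruct dseq_values as [-> _]. now rewrite b1.
  - apply root_of_isotropic; [lia | lia | discriminate | unfold qform; cbn [fst snd]; nia].
Qed.

Lemma root_alpha1_add_beta1 n : root_sub false alpha1 (betab true n).
Proof.
  destruct n as [|n]; [apply root_alpha1_add_alpha2|].
  unfold root_sub, signed. change alpha1 with ((1, 0) : vec).
  apply root_of_isotropic; [lia | lia | ..].
  - rewrite betab_true. pose proof (cseq_pos n). unfold vsub, vneg; cbn [fst snd].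
    apply vec_neq0_fst; cbn [fst]; lia.
  - rewrite qform_add_alpha1. pose proof (qform_betab_le true (S n)) as Hq.
    rewrite betab_true in *; cbn [fst snd].
    assert (2 * c (S n) - a * d (S (S n)) = c (S n) - c (S (S (S n)))) by (rewrite (cseq_rec (S n)); ring).
    destruct n as [|n].
    + destruct cseq_values as (_ & c3 & _), dseq_values as (d2 & _).
      rewrite c3, d2 in *. cbn [cseq cd] in *. unfold qform; cbn [fst snd]. nia.
    + pose proof (cseq_gap_large n). nia.
Qed.

Lemma root_alpha2_add_beta2 n : root_sub false alpha2 (betab false n).
Proof.
  destruct n as [|n]; [apply root_sub_sym, root_alpha1_add_alpha2|].
  unfold root_sub, signed. change alpha2 with ((0, 1) : vec).
  apply root_of_isotropic; [lia | lia | ..].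
  - rewrite betab_false. pose proof (cseq_pos (S n)). unfold vsub, vneg; cbn [fst snd].
    apply vec_neq0_fst; cbn [fst]; lia.
  - rewrite qform_add_alpha2. pose proof (qform_betab_le false (S n)) as Hq.
    rewrite betab_false in *; cbn [fst snd].
    pose proof (dseq_rec (S n)). pose proof (dseq_gap_ge2 n). nia.
Qed.

Lemma not_root_alpha2_add_beta1 n : ~ root_sub false alpha2 (betab true n).
Proof.
  unfold root_sub, signed. change alpha2 with ((0, 1) : vec).
  pose proof (qform_betab_ge true n) as Hq.
  assert (0 <= 2 * d (S n) - b * c n).
  { destruct n as [|n]; [cbn [cseq dseq cd]; lia|].
    pose proof (dseq_rec n). pose proof (dseq_nonneg_mono n). lia. }
  apply not_root_of_qform_gt; try lia; rewrite qform_add_alpha2; rewrite betab_true in *; cbn [fst snd]; nia.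
Qed.

Lemma not_root_alpha1_add_beta2 m : (b = 1 -> m <> 1%nat) ->
  ~ root_sub false alpha1 (betab false (S m)).
Proof.
  intros Hm. unfold root_sub, signed. change alpha1 with ((1, 0) : vec).
  pose proof (qform_betab_ge false (S m)) as Hq.
  assert (E : 2 * c (S (S m)) - a * d (S m) = c (S (S m)) - c m) by (rewrite (cseq_rec m); ring).
  assert (Hgap : a < b * (c (S (S m)) - c m) + b).
  { destruct cseq_values as (c2 & c3 & _).
    destruct m as [|[|m]]; [cbn [cseq cd]; nia | | pose proof (cseq_gap_large m); lia].
    rewrite c3. cbn [cseq cd]. destruct (Z.eq_dec b 1) as [b1 | ]; [now destruct Hm | nia]. }
  apply not_root_of_qform_gt; try lia; rewrite qform_add_alpha1; rewrite betab_false in *; cbn [fst snd]; nia.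
Qed.

Lemma root_alpha1_add_beta2_iff n : root_sub false alpha1 (betab false n) <-> b = 1 /\ n = 2%nat.
Proof.
  destruct n as [|m].
  - split; [|intros [_ E]; discriminate].
    unfold root_sub, signed. change (vsub alpha1 (vneg alpha1)) with ((2, 0) : vec).
    rewrite root_iff by lia. intros [H | [_ H]].
    + discriminate (real_root_primitive _ _ _ H).
    + unfold qform in H; cbn [fst snd] in H. lia.
  - destruct (Z.eq_dec b 1) as [b1 | b1]; [destruct (Nat.eq_dec m 1) as [-> | Hm]|].
    + split; [auto | intros _]. left.
      replace (vsub alpha1 (signed false (betab false 2))) with (betab false 1); [apply real_root_betab|].
      destruct cseq_values as (c2 & c3 & _), dseq_values as (d2 & _).
      rewrite !betab_false, c2, c3, d2, b1. unfold signed, vsub, vneg; cbn [fst snd cseq dseq cd]. f_equal; ring.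
    + split; [intro H; exfalso; revert H; now apply not_root_alpha1_add_beta2 | intros [_ E]; congruence].
    + split; [intro H; exfalso; revert H; now apply not_root_alpha1_add_beta2 | intros [E _]; congruence].
Qed.

Lemma root_betab0_add_other t m : root_sub false (betab t 0) (betab (negb t) m).
Proof. destruct t; [apply root_alpha2_add_beta2 | apply root_alpha1_add_beta1]. Qed.

Lemma root_betab0_add_same_iff t m :
  root_sub false (betab t 0) (betab t m) <-> t = false /\ b = 1 /\ m = 2%nat.
Proof.
  destruct t.
  - split; [intro H; exfalso; apply (not_root_alpha2_add_beta1 m H) | intros [E _]; discriminate].
  - rewrite root_alpha1_add_beta2_iff. tauto.
Qed.

Lemma root_betab_sub_same t j k : j <> k -> root_sub true (betab t j) (betab t k).
Proof.
  assert (forall j m, root_sub true (betab t j) (betab t (j + S m))).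
  { intros j' m. rewrite refl_invariant_same by apply root_sub_refl_invariant.
    rewrite root_sub_simple, refl_betab_other. apply root_betab0_add_other. }
  intro Hjk. destruct (Nat.lt_ge_cases j k).
  - replace k with (j + S (k - j - 1))%nat by lia. auto.
  - apply root_sub_sym. replace j with (k + S (j - k - 1))%nat by lia. auto.
Qed.

Lemma root_beta1_add_beta2 j k : root_sub false (betab true j) (betab false k).
Proof.
  rewrite refl_invariant_cross by (apply root_sub_refl_invariant || apply root_sub_sym).
  destruct (Nat.odd k).
  - apply (root_betab0_add_other true).
  - apply root_sub_sym, (root_betab0_add_other false).
Qed.

Lemma root_beta1_sub_beta2_iff j k :
  root_sub true (betab true j) (betab false k) <-> b = 1 /\ j = 1%nat /\ k = 0%nat.
Proof.
  rewrite refl_invariant_cross by (apply root_sub_refl_invariant || apply root_sub_sym).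
  destruct (Nat.odd k) eqn:Hk.
  - rewrite root_sub_simple, (refl_betab_same false). split.
    + intro H. exfalso. exact (not_root_alpha2_add_beta1 _ H).
    + intros (_ & _ & ->). discriminate.
  - rewrite (root_sub_comm true), root_sub_simple, (refl_betab_same true).
    rewrite root_alpha1_add_beta2_iff.
    destruct k as [|[|k]]; [|discriminate|]; split; lia.
Qed.

Lemma root_betab_add_same_iff t j m :
  root_sub false (betab t j) (betab t (j + m)) <-> b = 1 /\ m = 2%nat /\ Nat.odd j = t.
Proof.
  rewrite refl_invariant_same by apply root_sub_refl_invariant.
  rewrite root_betab0_add_same_iff.
  destruct t, (Nat.odd j); simpl; intuition congruence.
Qed.

Lemma root_sub_betab t j t' k : (t = t' -> j <> k) -> root_sub (eqb t t') (betab t j) (betab t' k).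
Proof.
  intro Hjk. destruct t, t'; cbn [eqb].
  - now apply root_betab_sub_same, Hjk.
  - apply root_beta1_add_beta2.
  - apply root_sub_sym, root_beta1_add_beta2.
  - now apply root_betab_sub_same, Hjk.
Qed.

Lemma root_signed_betab_sub s t j s' t' k :
  xorb s t = xorb s' t' -> signed s (betab t j) <> signed s' (betab t' k) ->
  root a b (vsub (signed s (betab t j)) (signed s' (betab t' k))).
Proof.
  intros Hpar Hne. rewrite vsub_signed, root_signed_iff.
  replace (eqb s s') with (eqb t t') by (destruct s, s', t, t'; simpl in *; congruence).
  apply root_sub_betab. intros <- <-. apply Hne.
  replace s' with s by (destruct s, s', t; simpl in *; congruence). reflexivity.
Qed.

Lemma pi_system_pair u v : real_root a b u -> real_root a b v ->
  pi_system a b (pair_set u v) <-> ~ root a b (vsub u v).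
Proof.
  intros Hu Hv. split.
  - intros [_ H]. apply H; [left | right]; reflexivity.
  - intros H. split; [now intros x [-> | ->]|].
    assert (Hz : ~ root a b (0, 0)) by (apply not_root_zero; lia).
    intros x y [-> | ->] [-> | ->]; rewrite ?vsub_diag; auto.
    rewrite <- vneg_vsub, root_vneg_iff. exact H.
Qed.

Lemma pi_system_set_eq S T : set_eq S T -> pi_system a b S -> pi_system a b T.
Proof. intros E [H1 H2]. split; intros; apply H1 || apply H2; apply E; auto. Qed.

Lemma pi_system_label S v : pi_system a b S -> S v -> exists s t j, v = signed s (betab t j).
Proof. intros [H _] Hv. apply real_root_iff_signed_betab, H, Hv. Qed.

Lemma pi_system_label_parity S s t j s' t' k : pi_system a b S ->
  S (signed s (betab t j)) -> S (signed s' (betab t' k)) ->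
  signed s (betab t j) <> signed s' (betab t' k) -> xorb s t <> xorb s' t'.
Proof.
  intros [_ HS] Hu Hv Hne Hpar. apply (HS _ _ Hu Hv). now apply root_signed_betab_sub.
Qed.

(* Only two parities are available for the labels of three distinct elements. *)
Lemma pi_system_at_most_two S : pi_system a b S ->
  forall x y z, S x -> S y -> S z -> x = y \/ x = z \/ y = z.
Proof.
  intros HS x y z Hx Hy Hz.
  destruct (vec_eq_dec x y) as [|Hxy], (vec_eq_dec x z) as [|Hxz], (vec_eq_dec y z) as [|Hyz];
    auto; exfalso.
  destruct (pi_system_label S x HS Hx) as (s1 & t1 & j1 & ->).
  destruct (pi_system_label S y HS Hy) as (s2 & t2 & j2 & ->).
  destruct (pi_system_label S z HS Hz) as (s3 & t3 & j3 & ->).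
  pose proof (pi_system_label_parity S _ _ _ _ _ _ HS Hx Hy Hxy).
  pose proof (pi_system_label_parity S _ _ _ _ _ _ HS Hx Hz Hxz).
  pose proof (pi_system_label_parity S _ _ _ _ _ _ HS Hy Hz Hyz).
  destruct (xorb s1 t1), (xorb s2 t2), (xorb s3 t3); congruence.
Qed.

Lemma pi_system_pair_set S x y : pi_system a b S -> S x -> S y -> x <> y ->
  set_eq S (pair_set x y).
Proof.
  intros HS Hx Hy Hne z. split.
  - intros Hz. destruct (pi_system_at_most_two S HS x y z Hx Hy Hz) as [E | [E | E]];
      [contradiction | left | right]; auto.
  - now intros [-> | ->].
Qed.

Lemma set_eq_pair_swap S u v : set_eq S (pair_set u v) -> set_eq S (pair_set v u).
Proof. intros E x. rewrite (E x). unfold pair_set. tauto. Qed.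

Lemma pi_system_pair_vneg u v :
  pi_system a b (pair_set (vneg u) (vneg v)) -> pi_system a b (pair_set u v).
Proof.
  intros [H1 H2].
  assert (Hr : forall w, real_root a b (vneg w) -> real_root a b w).
  { intros w H. rewrite <- (vneg_involutive w). now apply real_root_vneg. }
  apply pi_system_pair; [apply Hr, H1; now left | apply Hr, H1; now right |].
  rewrite <- root_vneg_iff.
  replace (vneg (vsub u v)) with (vsub (vneg u) (vneg v)) by exact (vsub_signed false false u v).
  apply H2; [left | right]; reflexivity.
Qed.

Lemma pi_system_shape S : pi_system a b S -> (exists u v, S u /\ S v /\ u <> v) ->
  (exists j k : nat, set_eq S (pair_set (beta1 a b j) (beta2 a b k)) /\
      pi_system a b (pair_set (beta1 a b j) (beta2 a b k)))
  \/ (exists j k : nat, set_eq S (pair_set (vneg (beta1 a b j)) (vneg (beta2 a b k))) /\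
      pi_system a b (pair_set (beta1 a b j) (beta2 a b k)))
  \/ (exists i j k : nat, (i = 1%nat \/ i = 2%nat) /\
      set_eq S (pair_set (beta a b i j) (vneg (beta a b i k)))).
Proof.
  intros HS (x & y & Hx & Hy & Hne).
  pose proof (pi_system_pair_set S x y HS Hx Hy Hne) as E.
  destruct (pi_system_label S x HS Hx) as (s & t & j & ->).
  destruct (pi_system_label S y HS Hy) as (s' & t' & k & ->).
  pose proof (pi_system_label_parity S _ _ _ _ _ _ HS Hx Hy Hne) as Hpar.
  destruct s, s', t, t'; cbn [xorb] in Hpar; try congruence; cbn [signed betab] in E.
  - left. exists j, k. split; [|apply (pi_system_set_eq S)]; assumption.
  - left. exists k, j. apply set_eq_pair_swap in E. split; [|apply (pi_system_set_eq S)]; assumption.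
  - right; right. exists 1%nat, j, k. split; [now left | exact E].
  - right; right. exists 2%nat, j, k. split; [now right | exact E].
  - right; right. exists 1%nat, k, j. split; [now left | now apply set_eq_pair_swap].
  - right; right. exists 2%nat, k, j. split; [now right | now apply set_eq_pair_swap].
  - right; left. exists j, k. split; [|apply pi_system_pair_vneg, (pi_system_set_eq S)]; assumption.
  - right; left. exists k, j. apply set_eq_pair_swap in E.
    split; [|apply pi_system_pair_vneg, (pi_system_set_eq S)]; assumption.
Qed.

Lemma pi_system_independent_or_opposite S : pi_system a b S ->
  (exists u v, S u /\ S v /\ u <> v) ->
  (forall u v, S u -> S v -> u <> v -> fst u * snd v - snd u * fst v <> 0)
  \/ (exists al, pos_real_root a b al /\ set_eq S (pair_set al (vneg al))).
Proof.
  intros HS (x & y & Hx & Hy & Hne).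
  pose proof (pi_system_pair_set S x y HS Hx Hy Hne) as E.
  destruct (Z.eq_dec (fst x * snd y - snd x * fst y) 0) as [Hdet | Hdet].
  - right.
    destruct (real_roots_collinear a b x y (proj1 HS x Hx) (proj1 HS y Hy) Hdet) as [-> | ->];
      [contradiction|].
    destruct (pi_system_label S x HS Hx) as (s & t & j & ->).
    exists (betab t j). split; [split; [apply real_root_betab | apply betab_nonneg]|].
    destruct s; [exact E|]. cbn [signed] in E. rewrite vneg_involutive in E.
    now apply set_eq_pair_swap.
  - left. intros u v Hu Hv Huv. apply E in Hu, Hv.
    destruct Hu as [-> | ->], Hv as [-> | ->]; try contradiction; lia.
Qed.

Lemma pi_system_beta1_beta2_iff (b1 : b = 1) j k :
  pi_system a b (pair_set (beta1 a b j) (beta2 a b k)) <-> (j, k) <> (1%nat, 0%nat).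
Proof.
  change (pi_system a b (pair_set (betab true j) (betab false k)) <-> (j, k) <> (1%nat, 0%nat)).
  rewrite pi_system_pair by apply real_root_betab.
  change (~ root_sub true (betab true j) (betab false k) <-> (j, k) <> (1%nat, 0%nat)).
  rewrite root_beta1_sub_beta2_iff.
  split; intros H E; apply H; [injection E | destruct E as (_ & -> & ->)]; auto.
Qed.

Lemma root_betab_add_pair_iff t j k : root_sub false (betab t j) (betab t k) <->
  b = 1 /\ exists s, Nat.odd s = t /\ ((j = s /\ k = s + 2) \/ (j = s + 2 /\ k = s))%nat.
Proof.
  destruct (Nat.le_ge_cases j k) as [H | H].
  - destruct (Nat.le_exists_sub j k H) as (m & -> & _).
    rewrite Nat.add_comm, root_betab_add_same_iff. split.
    + intros (? & -> & ?). split; [|exists j]; auto.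
    + intros (? & s & ? & [[-> E] | [-> E]]); repeat split; auto; lia.
  - destruct (Nat.le_exists_sub k j H) as (m & -> & _).
    rewrite (root_sub_comm false), Nat.add_comm, root_betab_add_same_iff.
    split.
    + intros (? & -> & ?). split; [|exists k]; auto.
    + intros (? & s & ? & [[E ->] | [E ->]]); repeat split; auto; lia.
Qed.

Lemma pi_system_betab_opposite_iff t j k :
  pi_system a b (pair_set (betab t j) (vneg (betab t k))) <->
  ~ (b = 1 /\ exists s, Nat.odd s = t /\ ((j = s /\ k = s + 2) \/ (j = s + 2 /\ k = s))%nat).
Proof.
  rewrite pi_system_pair by (apply real_root_betab || apply real_root_vneg, real_root_betab).
  apply not_iff_compat, root_betab_add_pair_iff.
Qed.

Lemma pi_system_beta_opposite (b_ge2 : 2 <= b) i j k :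
  pi_system a b (pair_set (beta a b i j) (vneg (beta a b i k))).
Proof.
  change (pi_system a b (pair_set (betab (Nat.eqb i 1) j) (vneg (betab (Nat.eqb i 1) k)))).
  apply pi_system_betab_opposite_iff. intros [? _]. lia.
Qed.

Lemma pi_system_beta_opposite_iff (b1 : b = 1) i j k : (i = 1 \/ i = 2)%nat ->
  pi_system a b (pair_set (beta a b i j) (vneg (beta a b i k))) <->
  ~ (exists s : nat, (s mod 2 = i mod 2)%nat /\
       ((j = s /\ k = s + 2) \/ (j = s + 2 /\ k = s))%nat).
Proof.
  intros Hi.
  change (beta a b i) with (betab (Nat.eqb i 1)). rewrite pi_system_betab_opposite_iff.
  apply not_iff_compat. split.
  - intros (_ & s & Hs & Hjk). exists s. split; [apply odd_iff_mod2|]; auto.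
  - intros (s & Hs & Hjk). split; [exact b1|]. exists s. split; [apply odd_iff_mod2|]; auto.
Qed.

End Classification.

Theorem theorem4p1 (a b : Z) (hba : b <= a) (hb : 1 <= b)
    (hab : 2 <= b \/ (b = 1 /\ 5 <= a)) :
  (* classification *)
  (forall S : vec -> Prop, pi_system a b S ->
     (exists u v, S u /\ S v /\ u <> v) ->
     ((exists j k : nat, set_eq S (pair_set (beta1 a b j) (beta2 a b k)) /\
          pi_system a b (pair_set (beta1 a b j) (beta2 a b k)))
      \/ (exists j k : nat,
          set_eq S (pair_set (vneg (beta1 a b j)) (vneg (beta2 a b k))) /\
          pi_system a b (pair_set (beta1 a b j) (beta2 a b k)))
      \/ (exists (i j k : nat), (i = 1%nat \/ i = 2%nat) /\
          set_eq S (pair_set (beta a b i j) (vneg (beta a b i k)))))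
     (* in particular |S| <= 2 *)
     /\ (forall x y z, S x -> S y -> S z -> x = y \/ x = z \/ y = z)
     (* and S is linearly independent unless S = {alpha, -alpha} *)
     /\ ((forall u v, S u -> S v -> u <> v ->
            fst u * snd v - snd u * fst v <> 0)
         \/ (exists al, pos_real_root a b al /\ set_eq S (pair_set al (vneg al)))))
  /\ (* for b = 1, a >= 5: {beta_1^j, beta_2^k} is a pi-system iff (j,k) <> (1,0) *)
  (b = 1 -> forall j k : nat,
     pi_system a b (pair_set (beta1 a b j) (beta2 a b k)) <-> (j, k) <> (1%nat, 0%nat))
  /\ (* converse, b >= 2 *)
  (2 <= b -> forall i j k : nat, (i = 1%nat \/ i = 2%nat) ->
     pi_system a b (pair_set (beta a b i j) (vneg (beta a b i k))))
  /\ (* converse, b = 1, a >= 5 *)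
  (b = 1 -> forall i j k : nat, (i = 1%nat \/ i = 2%nat) ->
     (pi_system a b (pair_set (beta a b i j) (vneg (beta a b i k))) <->
      ~ (exists s : nat, Nat.modulo s 2 = Nat.modulo i 2 /\
           ((j = s /\ k = (s + 2)%nat) \/ (j = (s + 2)%nat /\ k = s))))).
Proof.
  assert (ab_ge4 : 4 <= a * b) by (destruct hab as [? | [-> ?]]; nia).
  assert (a_ge5 : b = 1 -> 5 <= a) by (intros ->; destruct hab as [? | [_ ?]]; lia).
  split; [|split; [|split]].
  - intros S HS Hne. split; [|split].
    + exact (pi_system_shape a b hb hba ab_ge4 a_ge5 S HS Hne).
    + exact (pi_system_at_most_two a b hb hba ab_ge4 a_ge5 S HS).
    + exact (pi_system_independent_or_opposite a b hb hba ab_ge4 a_ge5 S HS Hne).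
  - exact (pi_system_beta1_beta2_iff a b hb hba ab_ge4 a_ge5).
  - intros b_ge2 i j k _. exact (pi_system_beta_opposite a b hb hba ab_ge4 a_ge5 b_ge2 i j k).
  - exact (pi_system_beta_opposite_iff a b hb hba ab_ge4 a_ge5).
Qed.
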